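(* In ASD, an object $X$ has an effective basis indexed by some overt discrete object $N$ if and only if $X$ is a $\Sigma$-split subobject of $\Sigma^N$ for some overt discrete $N$. Explicitly, from a basis $(\beta^n,A_n)$ one gets $i:X\to\Sigma^N$, $ix=\lambda n.\beta^nx$, and $I:\Sigma^X\to\Sigma^{\Sigma^N}$, $I\phi=\lambda\xi.\exists n.A_n\phi\wedge\xi n$, with $\Sigma^i\circ I=\mathrm{id}_{\Sigma^X}$; conversely, if $i:X\to Y$ is $\Sigma$-split with splitting $I$ and $(\beta^n,A_n)$ is an effective basis of $Y$, then $(\Sigma^i\beta^n,\ \lambda\phi.A_n(I\phi))$ is an effective basis of $X$ (a $\vee$- or $\wedge$-basis if the given one was).
   Context: ASD setting. $\mathcal S$ is a category with finite products and an object $\Sigma$ for which all exponentials $\Sigma^X$ exist; we reason in its simply typed $\lambda$-calculus (terms in a context $\Gamma$). $(\Sigma,\top,\bot,\wedge,\vee)$ is an internal distributive lattice, and each $\Sigma^X$ is a distributive lattice pointwise; the intrinsic order is $\phi\le\psi$ iff $\phi=\phi\wedge\psi$; on $\Sigma$ it is written $\Rightarrow$ and equality $\Leftrightarrow$. Phoa principle: $F\sigma\Leftrightarrow F\bot\vee(\sigma\wedge F\top)$ for $F:\Sigma^\Sigma,\sigma:\Sigma$. An object $N$ is overt discrete if it has an equality predicate $(=_N):N\times N\to\Sigma$ with $\Gamma\vdash n=m$ iff $\Gamma\vdash(n=_Nm)\Leftrightarrow\top$, and an existential quantifier $\exists_N:\Sigma^N\to\Sigma$ left adjoint to $\Sigma^{!}:\Sigma\to\Sigma^N$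 (written $\exists n.\phi n$). There is a natural numbers object $\mathbb N$, which is overt discrete. For overt discrete $N$, $\mathrm{Fin}(N)$ is the overt discrete object of finite lists over $N$, with membership $n\in\ell$ and bounded quantifiers $\exists n\in\ell$, $\forall n\in\ell$ defined by list recursion. Scott principle: for overt discrete $N$, $\Phi:\Sigma^{\Sigma^N},\xi:\Sigma^N$: $\Phi\xi\Leftrightarrow\exists\ell:\mathrm{Fin}(N).\ \Phi(\lambda n.n\in\ell)\wedge\forall n\in\ell.\xi n$. Sobriety: $P:\Sigma^{\Sigma^X}$ is prime if $\mathcal FP\Leftrightarrow P(\lambda x.\mathcal F(\lambda\phi.\phi x))$ for all $\mathcal F:\Sigma^{\Sigma^{\Sigma^X}}$; then there is a unique $a:X$ with $P=\lambda\phi.\phi a$. A nucleus is $E:\Sigma^Y\to\Sigma^Y$ with $E(\lambda y.\mathcal F(\lambda\phi.\phi y))=E(\lambda y.\mathcal F(\lambda\phi.E\phi y))$ for all $\mathcal F:\Sigma^{\Sigma^{\Sigma^Y}}$; for every nucleus there is a $\Sigma$-split subobject $i:X\to Y$, i.e. one with $I:\Sigma^X\to\Sigma^Y$, $\Sigma^i\circ I=\mathrm{id}$, and moreover $I\circ\Sigma^i=E$. A $\Sigma$-split subobject $i:X\to Y$ is a (regular) mono with some $I:\Sigma^X\to\Sigma^Y$ satisfying $\Sigma^i\circ I=\mathrm{id}_{\Sigma^X}$. Bases. An effective basis for $X$ indexed by an overt discrete $N$ is a pair of families $n:N\vdash\beta^n:\Sigma^X$ and $n:N\vdash A_n:\Sigma^{\Sigma^X}$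 with $\phi=\lambda x.\exists n.\ A_n\phi\wedge\beta^nx$ for all $\phi:\Sigma^X$. It is a $\vee$-basis if there are $0:N$ and $+:N\times N\to N$ with $\beta^0=\bot$, $A_0=\lambda\phi.\top$, $\beta^{n+m}=\beta^n\vee\beta^m$, $A_{n+m}=A_n\wedge A_m$; an $\wedge$-basis if there are $1:N$ and $\star:N\times N\to N$ with $\beta^1=\top$, $\beta^{n\star m}=\beta^n\wedge\beta^m$, $A_n\le A_{n\star m}$, $A_m\le A_{n\star m}$. *)

(* Deep embedding of the ASD setting:
   an abstract category with finite products and exponentials Sigma^X,
   reasoned about through generalized elements (terms in a context G are
   morphisms G -> A; equality of terms is equality of morphisms). *)

Set Implicit Arguments.

Record Cat := {
  Ob :> Type;
  Hom : Ob -> Ob -> Type;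
  idm : forall X, Hom X X;
  comp : forall X Y Z, Hom Y Z -> Hom X Y -> Hom X Z;
  one : Ob;
  bang : forall X, Hom X one;
  prod : Ob -> Ob -> Ob;
  fst_ : forall X Y, Hom (prod X Y) X;
  snd_ : forall X Y, Hom (prod X Y) Y;
  pair_ : forall Z X Y, Hom Z X -> Hom Z Y -> Hom Z (prod X Y);
  Sig : Ob;
  Exp : Ob -> Ob;
  ev : forall X, Hom (prod (Exp X) X) Sig;
  cur : forall G X, Hom (prod G X) Sig -> Hom G (Exp X);
  topS : Hom one Sig;
  botS : Hom one Sig;
  meetS : Hom (prod Sig Sig) Sig;
  joinS : Hom (prod Sig Sig) Sig
}.

Arguments Hom {c} _ _.
Arguments idm {c} X.
Arguments comp {c X Y Z} _ _.
Arguments one {c}.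
Arguments bang {c} X.
Arguments prod {c} _ _.
Arguments fst_ {c X Y}.
Arguments snd_ {c X Y}.
Arguments pair_ {c Z X Y} _ _.
Arguments Sig {c}.
Arguments Exp {c} _.
Arguments ev {c X}.
Arguments cur {c G X} _.
Arguments topS {c}.
Arguments botS {c}.
Arguments meetS {c}.
Arguments joinS {c}.

Section Lambda.
Context {C : Cat}.

Definition wk {G X A : Ob C} (t : Hom G A) : Hom (prod G X) A := comp t fst_.
Definition v0 {G X : Ob C} : Hom (prod G X) X := snd_.
Definition app {G X : Ob C} (f : Hom G (Exp X)) (a : Hom G X) : Hom G Sig :=
  comp ev (pair_ f a).
Definition lam {G X : Ob C} (b : Hom (prod G X) Sig) : Hom G (Exp X) := cur b.

Definition topT (G : Ob C) : Hom G Sig := comp topS (bang G).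
Definition botT (G : Ob C) : Hom G Sig := comp botS (bang G).
Definition meetT {G : Ob C} (a b : Hom G Sig) : Hom G Sig := comp meetS (pair_ a b).
Definition joinT {G : Ob C} (a b : Hom G Sig) : Hom G Sig := comp joinS (pair_ a b).
Definition leS {G : Ob C} (a b : Hom G Sig) : Prop := a = meetT a b.

Definition topE (G X : Ob C) : Hom G (Exp X) := lam (topT (prod G X)).
Definition botE (G X : Ob C) : Hom G (Exp X) := lam (botT (prod G X)).
Definition meetE {G X : Ob C} (a b : Hom G (Exp X)) : Hom G (Exp X) :=
  lam (meetT (app (wk a) v0) (app (wk b) v0)).
Definition joinE {G X : Ob C} (a b : Hom G (Exp X)) : Hom G (Exp X) :=
  lam (joinT (app (wk a) v0) (app (wk b) v0)).
Definition leE {G X : Ob C} (a b : Hom G (Exp X)) : Prop := a = meetE a b.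

Definition sigmap {X Y G : Ob C} (i : Hom X Y) (psi : Hom G (Exp Y)) : Hom G (Exp X) :=
  lam (app (wk psi) (comp i v0)).
Definition SigmaF {X Y : Ob C} (i : Hom X Y) : Hom (Exp Y) (Exp X) :=
  sigmap i (idm (Exp Y)).

Definition mono {X Y : Ob C} (i : Hom X Y) : Prop :=
  forall G (a b : Hom G X), comp i a = comp i b -> a = b.

Definition SigmaSplitWith {X Y : Ob C} (i : Hom X Y) (I : Hom (Exp X) (Exp Y)) : Prop :=
  mono i /\ comp (SigmaF i) I = idm (Exp X).
Definition SigmaSplit {X Y : Ob C} (i : Hom X Y) : Prop :=
  exists I : Hom (Exp X) (Exp Y), SigmaSplitWith i I.

Record OD (N : Ob C) := {
  odeq : Hom (prod N N) Sig;
  odex : Hom (Exp N) Sig;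
  odeq_spec : forall G (n m : Hom G N), n = m <-> comp odeq (pair_ n m) = topT G;
  odex_spec : forall G (phi : Hom G (Exp N)) (s : Hom G Sig),
      leS (comp odex phi) s <-> leE phi (lam (wk s))
}.

Definition ListRecEq {N L G A : Ob C} (lnil : Hom one L) (lcons : Hom (prod N L) L)
  (g0 : Hom G A) (g1 : Hom (prod G (prod N A)) A) (h : Hom (prod G L) A) : Prop :=
  comp h (pair_ (idm G) (comp lnil (bang G))) = g0 /\
  comp h (pair_ fst_ (comp lcons snd_)) =
    comp g1 (pair_ fst_ (pair_ (comp fst_ snd_) (comp h (pair_ fst_ (comp snd_ snd_))))).

Record ListObj (N : Ob C) := {
  lobj : Ob C;
  lnil : Hom one lobj;
  lcons : Hom (prod N lobj) lobj;
  lrec_ex : forall G A (g0 : Hom G A) (g1 : Hom (prod G (prod N A)) A),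
      exists h, ListRecEq lnil lcons g0 g1 h;
  lrec_uniq : forall G A (g0 : Hom G A) (g1 : Hom (prod G (prod N A)) A) h h',
      ListRecEq lnil lcons g0 g1 h -> ListRecEq lnil lcons g0 g1 h' -> h = h'
}.

Definition IsMem {N : Ob C} (D : OD N) (Lo : ListObj N) (mem : Hom (prod N (lobj Lo)) Sig)
  : Prop :=
  forall G (n m : Hom G N) (l : Hom G (lobj Lo)),
    comp mem (pair_ n (comp (lnil Lo) (bang G))) = botT G /\
    comp mem (pair_ n (comp (lcons Lo) (pair_ m l))) =
      joinT (comp (odeq D) (pair_ n m)) (comp mem (pair_ n l)).

Definition IsBall {N : Ob C} (Lo : ListObj N) (ball : Hom (prod (Exp N) (lobj Lo)) Sig)
  : Prop :=
  forall G (xi : Hom G (Exp N)) (m : Hom G N) (l : Hom G (lobj Lo)),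
    comp ball (pair_ xi (comp (lnil Lo) (bang G))) = topT G /\
    comp ball (pair_ xi (comp (lcons Lo) (pair_ m l))) =
      meetT (app xi m) (comp ball (pair_ xi l)).

Definition NatRecEq {Nn G A : Ob C} (z : Hom one Nn) (s : Hom Nn Nn)
  (g0 : Hom G A) (g1 : Hom (prod G A) A) (h : Hom (prod G Nn) A) : Prop :=
  comp h (pair_ (idm G) (comp z (bang G))) = g0 /\
  comp h (pair_ fst_ (comp s snd_)) = comp g1 (pair_ fst_ h).

(* primes (stable under substitution) *)
Definition Prime {G X : Ob C} (P : Hom G (Exp (Exp X))) : Prop :=
  forall D (s : Hom D G) (F : Hom D (Exp (Exp (Exp X)))),
    app F (comp P s) = app (comp P s) (lam (app (wk F) (lam (app v0 (wk v0))))).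

Definition Nucleus {Y : Ob C} (E : Hom (Exp Y) (Exp Y)) : Prop :=
  forall G (F : Hom G (Exp (Exp (Exp Y)))),
    comp E (lam (app (wk F) (lam (app v0 (wk v0))))) =
    comp E (lam (app (wk F) (lam (app (comp E v0) (wk v0))))).

Definition IsBasis {X N : Ob C} (D : OD N) (beta : Hom N (Exp X)) (A : Hom N (Exp (Exp X)))
  : Prop :=
  forall G (phi : Hom G (Exp X)),
    phi = lam (comp (odex D)
                 (lam (meetT (app (comp A v0) (wk (wk phi))) (app (comp beta v0) (wk v0))))).

Definition JoinBasis {X N : Ob C} (D : OD N) (beta : Hom N (Exp X))
  (A : Hom N (Exp (Exp X))) (z : Hom one N) (plus : Hom (prod N N) N) : Prop :=
  IsBasis D beta A /\
  comp beta z = botE one X /\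
  comp A z = topE one (Exp X) /\
  comp beta plus = joinE (comp beta fst_) (comp beta snd_) /\
  comp A plus = meetE (comp A fst_) (comp A snd_).

Definition MeetBasis {X N : Ob C} (D : OD N) (beta : Hom N (Exp X))
  (A : Hom N (Exp (Exp X))) (u : Hom one N) (star : Hom (prod N N) N) : Prop :=
  IsBasis D beta A /\
  comp beta u = topE one X /\
  comp beta star = meetE (comp beta fst_) (comp beta snd_) /\
  leE (comp A fst_) (comp A star) /\
  leE (comp A snd_) (comp A star).

Definition embI {X N : Ob C} (beta : Hom N (Exp X)) : Hom X (Exp N) :=
  lam (app (comp beta v0) fst_).

Definition splitI {X N : Ob C} (D : OD N) (A : Hom N (Exp (Exp X)))
  : Hom (Exp X) (Exp (Exp N)) :=
  lam (comp (odex D) (lam (meetT (app (comp A v0) (wk fst_)) (app (wk snd_) v0)))).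

Definition restrA {X Y N : Ob C} (I : Hom (Exp X) (Exp Y)) (A : Hom N (Exp (Exp Y)))
  : Hom N (Exp (Exp X)) :=
  lam (app (comp A fst_) (comp I v0)).

End Lambda.

Record ASD (C : Cat) := {
  ax_assoc : forall (W X Y Z : Ob C) (h : Hom Y Z) (g : Hom X Y) (f : Hom W X),
      comp h (comp g f) = comp (comp h g) f;
  ax_idl : forall (X Y : Ob C) (f : Hom X Y), comp (idm Y) f = f;
  ax_idr : forall (X Y : Ob C) (f : Hom X Y), comp f (idm X) = f;
  ax_bang : forall (X : Ob C) (f : Hom X one), f = bang X;
  ax_fst : forall (Z X Y : Ob C) (f : Hom Z X) (g : Hom Z Y), comp fst_ (pair_ f g) = f;
  ax_snd : forall (Z X Y : Ob C) (f : Hom Z X) (g : Hom Z Y), comp snd_ (pair_ f g) = g;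
  ax_pair : forall (Z X Y : Ob C) (h : Hom Z (prod X Y)),
      pair_ (comp fst_ h) (comp snd_ h) = h;
  ax_ev : forall (G X : Ob C) (f : Hom (prod G X) Sig),
      comp ev (pair_ (comp (cur f) fst_) snd_) = f;
  ax_cur : forall (G X : Ob C) (g : Hom G (Exp X)),
      cur (comp ev (pair_ (comp g fst_) snd_)) = g;
  ax_meet_assoc : forall (G : Ob C) (a b c : Hom G Sig), meetT a (meetT b c) = meetT (meetT a b) c;
  ax_join_assoc : forall (G : Ob C) (a b c : Hom G Sig), joinT a (joinT b c) = joinT (joinT a b) c;
  ax_meet_comm : forall (G : Ob C) (a b : Hom G Sig), meetT a b = meetT b a;
  ax_join_comm : forall (G : Ob C) (a b : Hom G Sig), joinT a b = joinT b a;
  ax_meet_absorb : forall (G : Ob C) (a b : Hom G Sig), meetT a (joinT a b) = a;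
  ax_join_absorb : forall (G : Ob C) (a b : Hom G Sig), joinT a (meetT a b) = a;
  ax_meet_top : forall (G : Ob C) (a : Hom G Sig), meetT a (topT G) = a;
  ax_join_bot : forall (G : Ob C) (a : Hom G Sig), joinT a (botT G) = a;
  ax_distr : forall (G : Ob C) (a b c : Hom G Sig),
      meetT a (joinT b c) = joinT (meetT a b) (meetT a c);
  ax_phoa : forall (G : Ob C) (F : Hom G (Exp Sig)) (s : Hom G Sig),
      app F s = joinT (app F (botT G)) (meetT s (app F (topT G)));
  natO : Ob C;
  nzero : Hom one natO;
  nsucc : Hom natO natO;
  nrec_ex : forall (G A : Ob C) (g0 : Hom G A) (g1 : Hom (prod G A) A),
      exists h, NatRecEq nzero nsucc g0 g1 h;
  nrec_uniq : forall (G A : Ob C) (g0 : Hom G A) (g1 : Hom (prod G A) A) h h',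
      NatRecEq nzero nsucc g0 g1 h -> NatRecEq nzero nsucc g0 g1 h' -> h = h';
  natOD : OD natO;
  finL : forall (N : Ob C), OD N -> ListObj N;
  finOD : forall (N : Ob C) (D : OD N), OD (lobj (finL D));
  ax_scott : forall (N : Ob C) (D : OD N) mem ball,
      IsMem D (finL D) mem -> IsBall (finL D) ball ->
      forall (G : Ob C) (Phi : Hom G (Exp (Exp N))) (xi : Hom G (Exp N)),
        app Phi xi =
        comp (odex (finOD D))
          (lam (meetT (app (wk Phi) (lam (comp mem (pair_ v0 (wk v0)))))
                      (comp ball (pair_ (wk xi) v0))));
  ax_sober : forall (X G : Ob C) (P : Hom G (Exp (Exp X))), Prime P ->
      exists a : Hom G X, P = lam (app v0 (wk a)) /\
        forall b : Hom G X, P = lam (app v0 (wk b)) -> b = a;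
  ax_nucleus : forall (Y : Ob C) (E : Hom (Exp Y) (Exp Y)), Nucleus E ->
      exists (X : Ob C) (i : Hom X Y) (I : Hom (Exp X) (Exp Y)),
        SigmaSplitWith i I /\ comp I (SigmaF i) = E
}.

(* A basis (beta, A) exhibits X as a retract of Sigma^N on the level of
   opens: i x = (n |-> beta^n x), and the basis equation
   phi x = exists n. A_n phi /\ beta^n x  says exactly that I phi restricted
   along i is phi.  The same equation shows that points with the same basic
   neighbourhoods have the same neighbourhood filter, so i is mono by
   sobriety.  Conversely a basis transfers along any Sigma-split subobject
   i : X -> Y by  phi = Sigma^i (I phi), and Sigma^N itself has the basis
   given by the Scott principle, indexed by Fin(N): beta^l = (xi |-> all n
   in l. xi n) and A_l Phi = Phi (n |-> n in l). *)

From Stdlib Require Import Setoid.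

Set Implicit Arguments.
Unset Strict Implicit.

Section ASDCalculus.
Variable C : Cat.
Hypothesis H : ASD C.

Lemma comp_assoc_r (W X Y Z : Ob C) (h : Hom Y Z) (g : Hom X Y) (f : Hom W X) :
  comp (comp h g) f = comp h (comp g f).
Proof. symmetry; apply (ax_assoc H). Qed.

Lemma pair_comp (W Z X Y : Ob C) (f : Hom Z X) (g : Hom Z Y) (h : Hom W Z) :
  comp (pair_ f g) h = pair_ (comp f h) (comp g h).
Proof.
  rewrite <- (ax_pair H _ _ _ (comp (pair_ f g) h)).
  rewrite !(ax_assoc H), (ax_fst H), (ax_snd H); reflexivity.
Qed.

Lemma fst_pair_comp (W Z X Y : Ob C) (f : Hom Z X) (g : Hom Z Y) (h : Hom W Z) :
  comp fst_ (comp (pair_ f g) h) = comp f h.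
Proof. rewrite (ax_assoc H), (ax_fst H); reflexivity. Qed.

Lemma snd_pair_comp (W Z X Y : Ob C) (f : Hom Z X) (g : Hom Z Y) (h : Hom W Z) :
  comp snd_ (comp (pair_ f g) h) = comp g h.
Proof. rewrite (ax_assoc H), (ax_snd H); reflexivity. Qed.

Lemma pair_fst_snd (X Y : Ob C) : pair_ (@fst_ C X Y) snd_ = idm _.
Proof. rewrite <- (ax_pair H _ _ _ (idm _)), !(ax_idr H); reflexivity. Qed.

Lemma bang_comp (X Y : Ob C) (f : Hom X Y) : comp (bang Y) f = bang X.
Proof. apply (ax_bang H). Qed.

Lemma cur_comp (D G X : Ob C) (b : Hom (prod G X) Sig) (h : Hom D G) :
  comp (cur b) h = cur (comp b (pair_ (comp h fst_) snd_)).
Proof.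
  rewrite <- (ax_cur H _ _ (comp (cur b) h)); f_equal.
  rewrite <- (ax_ev H _ _ b) at 2.
  rewrite (comp_assoc_r ev), pair_comp, (ax_snd H), !comp_assoc_r, (ax_fst H).
  reflexivity.
Qed.

Lemma ev_pair_cur (G X : Ob C) (b : Hom (prod G X) Sig) (a : Hom G X) :
  comp ev (pair_ (cur b) a) = comp b (pair_ (idm G) a).
Proof.
  rewrite <- (ax_ev H _ _ b) at 2.
  rewrite comp_assoc_r, pair_comp, comp_assoc_r, (ax_fst H), (ax_snd H), (ax_idr H).
  reflexivity.
Qed.

Lemma cur_inj (G X : Ob C) (b b' : Hom (prod G X) Sig) : cur b = cur b' -> b = b'.
Proof. intro E; rewrite <- (ax_ev H _ _ b), <- (ax_ev H _ _ b'), E; reflexivity. Qed.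

Ltac unfold_terms :=
  unfold SigmaF, sigmap, embI, splitI, restrA, leS, leE, meetE, joinE, topE, botE,
    meetT, joinT, topT, botT, app, lam, wk, v0 in *.
Ltac normalize :=
  repeat progress rewrite ?comp_assoc_r, ?(ax_fst H), ?(ax_snd H), ?fst_pair_comp,
    ?snd_pair_comp, ?pair_comp, ?cur_comp, ?ev_pair_cur, ?bang_comp, ?(ax_idl H),
    ?(ax_idr H), ?pair_fst_snd, ?(ax_cur H).
Ltac normalize_in E :=
  repeat progress rewrite ?comp_assoc_r, ?(ax_fst H), ?(ax_snd H), ?fst_pair_comp,
    ?snd_pair_comp, ?pair_comp, ?cur_comp, ?ev_pair_cur, ?bang_comp, ?(ax_idl H),
    ?(ax_idr H), ?pair_fst_snd, ?(ax_cur H) in E.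

Lemma point_prime (G X : Ob C) (a : Hom G X) : Prime (lam (app v0 (wk a))).
Proof. intros D s F; unfold_terms; normalize; reflexivity. Qed.

Lemma point_inj (G X : Ob C) (a b : Hom G X) :
  lam (app v0 (wk a)) = lam (app v0 (wk b)) -> a = b.
Proof.
  intro Eab.
  destruct (ax_sober H (point_prime a)) as [c [_ Huniq]].
  rewrite (Huniq a eq_refl); symmetry; apply Huniq; exact Eab.
Qed.

Section Basis.
Variables (X N : Ob C) (D : OD N) (beta : Hom N (Exp X)) (A : Hom N (Exp (Exp X))).
Hypothesis basis : IsBasis D beta A.

Lemma ev_basis {G : Ob C} (phi : Hom G (Exp X)) (x : Hom G X) :
  comp ev (pair_ phi x) =
  comp (odex D) (cur (comp meetS (pair_
     (comp ev (pair_ (comp A snd_) (comp phi fst_)))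
     (comp ev (pair_ (comp beta snd_) (comp x fst_)))))).
Proof. rewrite (basis phi) at 1; unfold_terms; normalize; reflexivity. Qed.

Lemma embI_mono : mono (embI beta).
Proof.
  intros G a b Eab; unfold_terms; normalize_in Eab; apply cur_inj in Eab.
  apply point_inj; unfold_terms; f_equal.
  rewrite (ev_basis snd_ (comp a fst_)), (ev_basis snd_ (comp b fst_)); normalize.
  (* move the equality of basic neighbourhoods into context G x Sigma^X x N *)
  pose proof (f_equal (fun t => comp t (pair_ (comp (@fst_ C G (Exp X))
                (@fst_ C (prod G (Exp X)) N)) snd_)) Eab) as Eab'.
  cbv beta in Eab'; normalize_in Eab'; rewrite Eab'; reflexivity.
Qed.

Lemma SigmaF_embI_splitI : comp (SigmaF (embI beta)) (splitI D A) = idm (Exp X).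
Proof.
  unfold_terms; rewrite <- (ax_cur H _ _ (idm (Exp X))); normalize; f_equal.
  transitivity (comp (@ev C X) (pair_ fst_ snd_));
    [| rewrite pair_fst_snd, (ax_idr H); reflexivity].
  rewrite (ev_basis fst_ snd_); normalize; reflexivity.
Qed.

Lemma basis_SigmaSplit : SigmaSplitWith (embI beta) (splitI D A).
Proof. split; [exact embI_mono | exact SigmaF_embI_splitI]. Qed.

End Basis.

Section Restriction.
Variables (X Y N : Ob C) (D : OD N) (i : Hom X Y) (I : Hom (Exp X) (Exp Y))
          (beta : Hom N (Exp Y)) (A : Hom N (Exp (Exp Y))).
Hypothesis split : SigmaSplitWith i I.

Lemma restr_basis : IsBasis D beta A -> IsBasis D (comp (SigmaF i) beta) (restrA I A).
Proof.
  intros basis G phi.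
  assert (Ephi : phi = comp (SigmaF i) (comp I phi)).
  { rewrite (ax_assoc H), (proj2 split), (ax_idl H); reflexivity. }
  rewrite Ephi at 1; unfold_terms; normalize.
  rewrite (ev_basis basis (comp I (comp phi fst_)) (comp i snd_)); normalize.
  reflexivity.
Qed.

Lemma restrA_comp (M : Ob C) (s : Hom M N) :
  comp (restrA I A) s = cur (comp ev (pair_ (comp (comp A s) fst_) (comp I snd_))).
Proof. unfold_terms; normalize; reflexivity. Qed.

Lemma SigmaF_comp (M : Ob C) (f : Hom M (Exp Y)) :
  comp (SigmaF i) f = cur (comp ev (pair_ (comp f fst_) (comp i snd_))).
Proof. unfold_terms; normalize; reflexivity. Qed.

Lemma restr_join_basis (z : Hom one N) (plus : Hom (prod N N) N) :
  JoinBasis D beta A z plus -> JoinBasis D (comp (SigmaF i) beta) (restrA I A) z plus.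
Proof.
  intros [basis [Hz_beta [Hz_A [Hplus_beta Hplus_A]]]].
  split; [exact (restr_basis basis) |].
  rewrite !comp_assoc_r, !restrA_comp, !SigmaF_comp, Hz_beta, Hz_A, Hplus_beta, Hplus_A.
  rewrite ?comp_assoc_r, ?restrA_comp, ?SigmaF_comp; unfold_terms; normalize.
  repeat split.
Qed.

Lemma restr_meet_basis (u : Hom one N) (star : Hom (prod N N) N) :
  MeetBasis D beta A u star -> MeetBasis D (comp (SigmaF i) beta) (restrA I A) u star.
Proof.
  intros [basis [Hu_beta [Hstar_beta [Hfst_A Hsnd_A]]]].
  split; [exact (restr_basis basis) |].
  unfold leE in Hfst_A, Hsnd_A |- *.
  rewrite !comp_assoc_r, !restrA_comp, !SigmaF_comp, Hu_beta, Hstar_beta.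
  split; [| split; [| split]].
  - unfold_terms; normalize; reflexivity.
  - unfold_terms; normalize; reflexivity.
  - rewrite Hfst_A at 1; unfold_terms; normalize; reflexivity.
  - rewrite Hsnd_A at 1; unfold_terms; normalize; reflexivity.
Qed.

End Restriction.

Section ScottBasis.
Variables (N : Ob C) (D : OD N).

Lemma exists_fin_mem : exists mem, IsMem D (finL H D) mem.
Proof.
  destruct (lrec_ex (finL H D) _ _ (botT N)
     (comp joinS (pair_ (comp (odeq D) (pair_ fst_ (comp fst_ snd_))) (comp snd_ snd_))))
    as [mem [Hnil Hcons]].
  exists mem; intros G n m l; split.
  - transitivity (comp (comp mem (pair_ (idm N) (comp (lnil (finL H D)) (bang N)))) n);
      [normalize; reflexivity |].
    rewrite Hnil; unfold_terms; normalize; reflexivity.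
  - transitivity (comp (comp mem (pair_ fst_ (comp (lcons (finL H D)) snd_)))
                       (pair_ n (pair_ m l)));
      [normalize; reflexivity |].
    rewrite Hcons; unfold_terms; normalize; reflexivity.
Qed.

Lemma exists_fin_ball : exists ball, IsBall (finL H D) ball.
Proof.
  destruct (lrec_ex (finL H D) _ _ (topT (Exp N))
     (comp meetS (pair_ (comp ev (pair_ fst_ (comp fst_ snd_))) (comp snd_ snd_))))
    as [ball [Hnil Hcons]].
  exists ball; intros G xi m l; split.
  - transitivity (comp (comp ball (pair_ (idm _) (comp (lnil (finL H D)) (bang _)))) xi);
      [normalize; reflexivity |].
    rewrite Hnil; unfold_terms; normalize; reflexivity.
  - transitivity (comp (comp ball (pair_ fst_ (comp (lcons (finL H D)) snd_)))
                       (pair_ xi (pair_ m l)));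
      [normalize; reflexivity |].
    rewrite Hcons; unfold_terms; normalize; reflexivity.
Qed.

Lemma Sigma_exp_basis :
  exists (beta : Hom (lobj (finL H D)) (Exp (Exp N)))
         (A : Hom (lobj (finL H D)) (Exp (Exp (Exp N)))),
    IsBasis (finOD H D) beta A.
Proof.
  destruct exists_fin_mem as [mem Hmem]; destruct exists_fin_ball as [ball Hball].
  exists (cur (comp ball (pair_ snd_ fst_))).
  exists (cur (comp ev (pair_ snd_ (cur (comp mem (pair_ snd_ (comp fst_ fst_))))))).
  intros G phi; rewrite <- (ax_cur H _ _ phi) at 1.
  pose proof (ax_scott H Hmem Hball (prod G (Exp N)) (comp phi fst_) snd_) as Hscott.
  unfold_terms; rewrite Hscott; normalize; reflexivity.
Qed.

End ScottBasis.

End ASDCalculus.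

Theorem corollary7p8 (C : Cat) (H : ASD C) :
  (forall X : Ob C,
     (exists (N : Ob C) (D : OD N) (beta : Hom N (Exp X)) (A : Hom N (Exp (Exp X))),
         IsBasis D beta A)
     <->
     (exists (N : Ob C) (D : OD N) (i : Hom X (Exp N)), SigmaSplit i))
  /\
  (forall (X N : Ob C) (D : OD N) (beta : Hom N (Exp X)) (A : Hom N (Exp (Exp X))),
     IsBasis D beta A -> SigmaSplitWith (embI beta) (splitI D A))
  /\
  (forall (X Y N : Ob C) (D : OD N) (i : Hom X Y) (I : Hom (Exp X) (Exp Y))
          (beta : Hom N (Exp Y)) (A : Hom N (Exp (Exp Y))),
     SigmaSplitWith i I -> IsBasis D beta A ->
     IsBasis D (comp (SigmaF i) beta) (restrA I A)
     /\ (forall (z : Hom one N) (plus : Hom (prod N N) N),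
           JoinBasis D beta A z plus ->
           JoinBasis D (comp (SigmaF i) beta) (restrA I A) z plus)
     /\ (forall (u : Hom one N) (star : Hom (prod N N) N),
           MeetBasis D beta A u star ->
           MeetBasis D (comp (SigmaF i) beta) (restrA I A) u star)).
Proof.
  split; [| split].
  - intro X; split.
    + intros [N [D [beta [A basis]]]].
      exists N, D, (embI beta), (splitI D A); exact (basis_SigmaSplit H basis).
    + intros [N [D [i [I split]]]].
      destruct (Sigma_exp_basis H D) as [beta [A basis]].
      exists (lobj (finL H D)), (finOD H D), (comp (SigmaF i) beta), (restrA I A).
      exact (restr_basis H split basis).
  - intros X N D beta A basis; exact (basis_SigmaSplit H basis).
  - intros X Y N D i I beta A split basis.
    split; [| split].
    + exact (restr_basis H split basis).
    + exact (restr_join_basis H split).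
    + exact (restr_meet_basis H split).
Qed.
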